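(* Let $N\ge 3$ be odd, let $K=\tilde F(N)$, and let $\mathcal{A}$ be a $K\times N$ circular Florentine rectangle over $\mathbb{Z}_N$ with rows $\pi_0,\dots,\pi_{K-1}$. Let $L=N(N+1)$ and for $0\le m<K$ define the length-$L$ sequence $C^m=(c^m_0,\dots,c^m_{L-1})$ by $c^m_i=\omega_{N+1}^{\pi_m(\langle i\rangle_N)\cdot i}$, $0\le i<L$. Then: (1) $\theta_a=\theta_c=\theta_{\max}=N+1$, where $\theta_a=\max\{|\theta_{C^m}(\tau)|:0\le m<K,\ 0<\tau<L\}$, $\theta_c=\max\{|\theta_{C^m,C^{m'}}(\tau)|:0\le m\neq m'<K,\ 0\le\tau<L\}$ and $\theta_{\max}=\max\{\theta_a,\theta_c\}$; (2) with $\Omega=\{1+a(N+1):a\in\mathbb{Z}_N\}$, for every $m$ the frequency-domain dual $\widehat{C}^m=(\hat c^m_0,\dots,\hat c^m_{L-1})$ satisfies $\hat c^m_j=0$ for $j\in\Omega$ and $|\hat c^m_j|=\sqrt{(N+1)/N}$ for $j\notin\Omega$ (so each $C^m$ is a spectrally constrained sequence with forbidden carrier set $\Omega$).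
   Context: $\omega_n=e^{2\pi\sqrt{-1}/n}$; $\langle i\rangle_N$ is $i$ reduced mod $N$. An $M\times N$ circular Florentine rectangle (CFR) over $\mathbb{Z}_N$ is an $M\times N$ array whose rows $\pi_i:\mathbb{Z}_N\to\mathbb{Z}_N$ are permutations of $\mathbb{Z}_N$ such that for every $m\in\mathbb{Z}_N\setminus\{0\}$ and all $i,j$, $x,y\in\mathbb{Z}_N$: $(\pi_i(x),\pi_i(x+m))=(\pi_j(y),\pi_j(y+m))$ (indices mod $N$) iff $i=j$ and $x=y$. $\tilde F(N)$ denotes the largest $M$ for which an $M\times N$ CFR exists (for odd $N\ge3$, $\tilde F(N)\ge 2$). Frequency-domain dual: $\hat c_k=\frac{1}{\sqrt L}\sum_{t=0}^{L-1}c_t\omega_L^{-tk}$. Periodic correlation: $\theta_{C,D}(\tau)=\sum_{t=0}^{L-1}c_td^*_{\langle t+\tau\rangle_L}$, $\theta_C=\theta_{C,C}$. *)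

From HB Require Import structures.
From mathcomp Require Import all_boot all_order all_algebra all_fingroup.
From mathcomp Require Import reals trigo.
From mathcomp Require Import complex.
Set Implicit Arguments. Unset Strict Implicit. Unset Printing Implicit Defensive.
Import Order.TTheory GRing.Theory Num.Theory.
Local Open Scope ring_scope.
Local Open Scope complex_scope.

(* x + m in Z_N, for x : 'I_N (x witnesses N > 0) *)
Definition zshift (N : nat) (x : 'I_N) (m : nat) : 'I_N :=
  Ordinal (ltn_pmod (x + m) (leq_ltn_trans (leq0n x) (ltn_ord x))).

Definition is_CFR (M N : nat) (pi : 'I_M -> {perm 'I_N}) : Prop :=
  forall (m : nat), (0 < m < N)%N ->
  forall (i j : 'I_M) (x y : 'I_N),
    (pi i x, pi i (zshift x m)) = (pi j y, pi j (zshift y m)) <->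
    (i = j /\ x = y).

Definition is_Ftilde (N K : nat) : Prop :=
  (exists pi : 'I_K -> {perm 'I_N}, is_CFR pi) /\
  (forall (M : nat) (pi : 'I_M -> {perm 'I_N}), is_CFR pi -> (M <= K)%N).

Section Seqs.
Local Unset Implicit Arguments.
Variable R : realType.
Local Notation C := R[i].

Definition omega (n : nat) : C :=
  Complex (cos (2 * pi / n%:R)) (sin (2 * pi / n%:R)).

Definition pcorr (L : nat) (c d : nat -> C) (tau : nat) : C :=
  \sum_(t < L) c t * conjc (d ((t + tau) %% L)%N).

Definition fdual (L : nat) (c : nat -> C) (k : nat) : C :=
  ((Num.sqrt (L%:R : R))^-1)%:C * \sum_(t < L) c t * omega L ^- (t * k).

Definition theta_a (K L : nat) (c : 'I_K -> nat -> C) : R :=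
  \big[Num.max/0]_(m < K) \big[Num.max/0]_(tau < L | (0 < tau)%N)
     ComplexField.Normc.normc (pcorr L (c m) (c m) tau).

Definition theta_c (K L : nat) (c : 'I_K -> nat -> C) : R :=
  \big[Num.max/0]_(m < K) \big[Num.max/0]_(m' < K | m != m')
     \big[Num.max/0]_(tau < L) ComplexField.Normc.normc (pcorr L (c m) (c m') tau).

Definition theta_max (K L : nat) (c : 'I_K -> nat -> C) : R :=
  Num.max (theta_a K L c) (theta_c K L c).

End Seqs.
Arguments omega {R} n.
Arguments pcorr {R} L c d tau.
Arguments fdual {R} L c k.
Arguments theta_a {R} K L c.
Arguments theta_c {R} K L c.
Arguments theta_max {R} K L c.

From HB Require Import structures.
From mathcomp Require Import all_boot all_order all_algebra all_fingroup.
From mathcomp Require Import reals trigo.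
From mathcomp Require Import complex.
From mathcomp Require Import ring lra zify.
Set Implicit Arguments.
Unset Strict Implicit.
Unset Printing Implicit Defensive.
Import Order.TTheory GRing.Theory Num.Theory.
Local Open Scope ring_scope.
Local Open Scope complex_scope.

(* Write t = x + N s with x < N and s <= N.  On the residue class of x the
   sequence C^m is the geometric progression c_{x+Ns} = w^(pi_m(x) x) (w^-pi_m(x))^s
   in w = omega_(N+1), so summing over s turns every correlation value and every
   DFT coefficient into a sum over x restricted by a congruence mod N+1 between
   permutation values; as these values are below N, the congruence is an equality.
   For distinct rows the Florentine property leaves at most one x, whence
   |theta_(m,m')(tau)| is 0 or N+1.  For a single row the equality forces N | tau,
   and what is left is the sum of N of the N+1 powers of a nontrivial (N+1)-th
   root of unity, of modulus 1.  For the dual exactly one x survives unless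
   j = 1 (mod N+1).  Finally N+1 is attained by theta_c because for odd N the
   identity and the negation of Z_N form a 2 x N circular Florentine rectangle. *)

Local Notation normc := ComplexField.Normc.normc.

Lemma big_ord_mul_split (T : Type) (idx : T) (op : Monoid.com_law idx)
    (n k : nat) (F : nat -> T) :
  \big[op/idx]_(t < n * k) F t = \big[op/idx]_(x < n) \big[op/idx]_(s < k) F (x + n * s)%N.
Proof.
elim: k => [|k IHk]; first by rewrite muln0 big_ord0 big1 // => x _; rewrite big_ord0.
rewrite mulnSr big_split_ord IHk /=.
under [RHS]eq_bigr do rewrite big_ord_recr /=.
by rewrite big_split /=; congr (op _ _); apply: eq_bigr => x _; rewrite addnC.
Qed.

Lemma bigmax_attained (R : realDomainType) (I : finType) (P : pred I) (F : I -> R)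
    (i0 : I) (B : R) :
  0 <= B -> P i0 -> F i0 = B -> (forall i, P i -> F i <= B) ->
  \big[Num.max/0]_(i | P i) F i = B.
Proof.
move=> B_ge0 Pi0 Fi0 leFB; apply: le_anti.
by rewrite bigmax_le //= (bigmax_sup i0) ?Fi0.
Qed.

Lemma dvdz_subn_small (d a b : nat) : (a < d)%N -> (b < d)%N ->
  (d%:Z %| a%:Z - b%:Z)%Z = (a == b).
Proof. by move=> a_lt_d b_lt_d; rewrite -eqz_mod_dvd !modz_nat eqz_nat !modn_small. Qed.

Lemma eqn_small_dvdn_addr (d a b j : nat) : (a < d)%N -> (b < d)%N ->
  (d %| a + j)%N -> (d %| b + j)%N -> a = b.
Proof.
move=> a_lt_d b_lt_d /eqP a_dvd /eqP b_dvd; apply/eqP.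
by rewrite -(modn_small a_lt_d) -(modn_small b_lt_d) -(eqn_modDr j) a_dvd b_dvd.
Qed.

Section UnityRoots.
Variable F : fieldType.

Lemma sum_expr_unity_root (q : F) (n : nat) : q ^+ n = 1 ->
  \sum_(s < n) q ^+ s = if q == 1 then n%:R else 0.
Proof.
move=> qn1; have [->|q_neq1] := eqVneq q 1.
  by under eq_bigr do rewrite expr1n; rewrite sumr_const card_ord.
apply/eqP; have := subrX1 q n; rewrite qn1 subrr => /esym/eqP.
by rewrite mulf_eq0 subr_eq0 (negbTE q_neq1).
Qed.

Lemma sum_expr_unity_root_but_last (q : F) (n : nat) : q ^+ n.+1 = 1 -> q != 1 ->
  \sum_(s < n) q ^+ s = - q ^+ n.
Proof.
move=> qn1 q_neq1; have := sum_expr_unity_root qn1.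
by rewrite (negbTE q_neq1) big_ord_recr /= => /eqP; rewrite addr_eq0 => /eqP.
Qed.

Variables (n : nat) (z : F).
Hypothesis prim_z : n.-primitive_root z.

Lemma prim_order_dvdz (k : int) : (n%:Z %| k)%Z = (z ^ k == 1).
Proof.
case: k => m; first by rewrite -exprnP -(prim_order_dvd prim_z).
by rewrite NegzE -exprnN invr_eq1 -(prim_order_dvd prim_z) dvdzE abszN.
Qed.

Lemma eq_prim_root_exprz (k l : int) : (z ^ k == z ^ l) = (k == l %[mod n])%Z.
Proof.
have z_neq0 : z != 0 by rewrite (prim_root_eq0 prim_z) -lt0n (prim_order_gt0 prim_z).
rewrite eqz_mod_dvd prim_order_dvdz -[in LHS](subrK l k) [in LHS]expfzDr //.
by rewrite -{2}(mul1r (z ^ l)) (inj_eq (mulIf (expfz_neq0 _ z_neq0))).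
Qed.

Lemma sum_prim_root_exprz (d : int) :
  \sum_(s < n) (z ^ d) ^+ s = if (n%:Z %| d)%Z then n%:R else 0.
Proof.
rewrite prim_order_dvdz sum_expr_unity_root //.
by rewrite exprnP exprz_exp mulrC -exprz_exp -exprnP (prim_expr_order prim_z) exp1rz.
Qed.

End UnityRoots.

Lemma normcX (R : rcfType) (x : R[i]) (k : nat) : normc (x ^+ k) = normc x ^+ k.
Proof.
elim: k => [|k IHk]; first by rewrite !expr0 ComplexField.Normc.normc1.
by rewrite !exprS ComplexField.Normc.normcM IHk.
Qed.

Lemma normc_nat (R : rcfType) (k : nat) : normc (k%:R : R[i]) = k%:R.
Proof. by rewrite normcMn ComplexField.Normc.normc1. Qed.

Lemma normc_real (R : rcfType) (r : R) : 0 <= r -> normc (r%:C) = r.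
Proof. by move=> r_ge0; rewrite /= expr0n addr0 sqrtr_sqr ger0_norm. Qed.

Lemma normc_sum_uniq (R : rcfType) (I : finType) (P : pred I) (F : I -> R[i]) (B : R) :
  (forall x y, P x -> P y -> x = y) -> (forall x, P x -> normc (F x) = B) ->
  normc (\sum_(x | P x) F x) = if [exists x, P x] then B else 0.
Proof.
move=> P_uniq normF; case: existsP => [[x0 Px0] | noP].
  rewrite (bigD1 x0) //= big_pred0 ?addr0 ?normF // => x.
  by apply/andP => -[Px /eqP []]; apply: P_uniq.
rewrite big_pred0 ?ComplexField.Normc.normc0 // => x.
by apply/negP => Px; apply: noP; exists x.
Qed.

Lemma invsqrt_mulnS (R : rcfType) (k : nat) : (0 < k)%N ->
  (Num.sqrt ((k * (k + 1))%N%:R))^-1 * (k + 1)%:R = Num.sqrt ((k + 1)%:R / k%:R) :> R.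
Proof.
move=> k_gt0; have k_neq0 : k%:R != 0 :> R by rewrite pnatr_eq0 -lt0n.
have k1_neq0 : k%:R + 1 != 0 :> R by rewrite natr1 pnatr_eq0.
rewrite -[LHS]ger0_norm ?mulr_ge0 ?invr_ge0 ?sqrtr_ge0 ?ler0n // -sqrtr_sqr.
by congr Num.sqrt; rewrite exprMn exprVn sqr_sqrtr ?ler0n // natrM natrD; field; rewrite k_neq0.
Qed.

Section Omega.
Variable R : realType.
Local Notation C := R[i].

Lemma cos_lt1 (x : R) : 0 < x < pi *+ 2 -> cos x < 1.
Proof.
move=> /andP[x_gt0 x_lt2pi].
have sin_half_gt0 : 0 < sin (x / 2) by apply: sin_gt0_pi; apply/andP; split; lra.
have -> : x = (x / 2) *+ 2 by rewrite mulr2n -splitr.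
by rewrite cos_mulr2n cos2sin2; nra.
Qed.

Lemma omega_expr (n k : nat) :
  omega n ^+ k = cos (k%:R * (2 * pi / n%:R)) +i* sin (k%:R * (2 * pi / n%:R)) :> C.
Proof.
rewrite /omega; set a := 2 * pi / n%:R.
elim: k => [|k IHk]; first by rewrite expr0 !mul0r cos0 sin0.
rewrite exprSr IHk -natr1 mulrDl mul1r cosD sinD; congr Complex => /=; ring.
Qed.

Lemma omega_prim (n : nat) : (0 < n)%N -> n.-primitive_root (omega n : C).
Proof.
move=> n_gt0; apply/andP; split => //; apply/forallP => i.
have n_neq0 : n%:R != 0 :> R by rewrite pnatr_eq0 -lt0n.
rewrite unity_rootE omega_expr; have [i1_eq_n | i1_neq_n] := eqVneq i.+1 n.
  have -> : i.+1%:R * (2 * pi / n%:R) = pi *+ 2 :> R.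
    by rewrite i1_eq_n mulrC divfK // mulr2n; ring.
  by rewrite cos2pi sin2pi !eqxx.
rewrite eqbF_neg; apply/eqP => -[cos_eq1 _].
suff : cos (i.+1%:R * (2 * pi / n%:R)) < 1 :> R by rewrite cos_eq1 ltxx.
apply: cos_lt1.
have i1_lt_n : (i.+1%:R : R) < n%:R by rewrite ltr_nat ltn_neqAle i1_neq_n ltn_ord.
have pi_gt0 := pi_gt0 R; have n_gt0R : (0 : R) < n%:R by rewrite ltr0n.
rewrite mulrA ltr_pdivrMr // mulr_gt0 ?invr_gt0 ?mulr_gt0 ?ltr0n //=.
by rewrite mulr2n; nra.
Qed.

Lemma normc_omega (n : nat) : normc (omega n : C) = 1.
Proof. by rewrite /= cos2Dsin2 sqrtr1. Qed.

Lemma normc_omega_expz (n : nat) (k : int) : normc (omega n ^ k : C) = 1.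
Proof.
case: k => k; first by rewrite -exprnP normcX normc_omega expr1n.
by rewrite NegzE -exprnN ComplexField.Normc.normcV normcX normc_omega expr1n invr1.
Qed.

Lemma conjc_omega_expr (n k : nat) : conjc (omega n ^+ k) = omega n ^ (- k%:Z) :> C.
Proof.
have conj_inv : conjc (omega n) = (omega n)^-1 :> C.
  have norm1 : `|omega n : C| = 1.
    by change ((normc (omega n : C))%:C = 1); rewrite normc_omega.
  by rewrite invC_norm norm1 expr1n invr1 mul1r.
have -> : conjc (omega n ^+ k) = conjc (omega n) ^+ k :> C by rewrite rmorphXn.
by rewrite conj_inv -exprnN exprVn.
Qed.

Lemma omega_mul_expr (m n : nat) : (0 < m)%N -> omega (m * n) ^+ m = omega n :> C.
Proof.
move=> m_gt0; rewrite omega_expr [m%:R * _](_ : _ = 2 * pi / n%:R) //.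
by rewrite natrM invfM mulrCA [m%:R * _]mulrA mulfV ?mul1r // pnatr_eq0 -lt0n.
Qed.

Lemma omega_exprz_mod (n : nat) (k l : int) : (0 < n)%N ->
  (k == l %[mod n])%Z -> omega n ^ k = omega n ^ l :> C.
Proof. by move=> n_gt0 kl; apply/eqP; rewrite (eq_prim_root_exprz (omega_prim n_gt0)). Qed.

Lemma normc_natr_omega (k n : nat) (z : int) :
  normc (k%:R * omega n ^ z : C) = k%:R.
Proof. by rewrite ComplexField.Normc.normcM normc_nat normc_omega_expz mulr1. Qed.

End Omega.

(* Z_N is 'I_n.+1, so that the shifts of is_CFR become additions in a ring. *)
Section Florentine.
Variable n : nat.
Local Notation N := n.+1.

Lemma zshiftE (x : 'I_N) (k : nat) : zshift x k = x + inZp k.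
Proof. by apply: val_inj; rewrite /= modnDmr. Qed.

Lemma zshift_eq (x : 'I_N) (k : nat) : (zshift x k == x) = (N %| k)%N.
Proof.
rewrite zshiftE -{2}(addr0 x) (inj_eq (addrI x)).
by rewrite -(inj_eq val_inj) /= /dvdn.
Qed.

Lemma inZp_split (x : 'I_N) (s : nat) : inZp (x + N * s) = x :> 'I_N.
Proof. by apply: val_inj; rewrite /= addnC mulnC modnMDl modn_small. Qed.

Lemma inZp_split_shift (x : 'I_N) (s k : nat) : inZp (x + N * s + k) = zshift x k :> 'I_N.
Proof. by apply: val_inj; rewrite /= -addnA addnCA mulnC modnMDl. Qed.

Lemma CFR_cross_uniq (K : nat) (p : 'I_K -> {perm 'I_N}) (m m' : 'I_K) (k : nat)
    (x y : 'I_N) : is_CFR p -> m != m' ->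
  p m x = p m' (zshift x k) -> p m y = p m' (zshift y k) -> x = y.
Proof.
move=> p_CFR neq_mm' px py; apply/eqP; apply: contraNT neq_mm' => neq_xy.
pose d : 'I_N := y - x.
have d_gt0 : (0 < d < N)%N.
  rewrite ltn_ord andbT lt0n; apply: contra neq_xy => /eqP d0.
  by rewrite eq_sym -subr_eq0; apply/eqP/val_inj.
have shift_x : zshift x d = y by rewrite zshiftE valZpK addrC subrK.
have shift_xk : zshift (zshift x k) d = zshift y k.
  by rewrite !zshiftE valZpK addrAC [x + _]addrC subrK.
suff [-> _] : m = m' /\ x = zshift x k by [].
by apply/(p_CFR d d_gt0); rewrite shift_x shift_xk px py.
Qed.

Lemma Zp_add_self_eq0 (k : 'I_N) : odd N -> (k + k == 0) = (k == 0).
Proof.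
move=> N_odd; rewrite -!(inj_eq val_inj) /=.
rewrite -/(dvdn N (k + k)) addnn -mul2n Gauss_dvdr ?coprimen2 //.
by rewrite /dvdn modn_small.
Qed.

Definition neg_perm : {perm 'I_N} := perm (@oppr_inj _).

Definition id_neg_rows (i : 'I_2) : {perm 'I_N} := if i == 0 then 1%g else neg_perm.

Lemma id_neg_rows_CFR : odd N -> is_CFR id_neg_rows.
Proof.
move=> N_odd k /andP[k_gt0 k_lt_N] i j x y; split => [|[-> ->] //].
have k_neq0 : (inZp k == 0 :> 'I_N) = false.
  by apply/negbTE; rewrite -(inj_eq val_inj) /= modn_small // -lt0n.
have id_neg_apart (u v : 'I_N) : u = - v -> u + inZp k = - (v + inZp k) -> False.
  move=> -> /eqP; rewrite opprD (inj_eq (addrI _)) -addr_eq0 Zp_add_self_eq0 //.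
  by rewrite k_neq0.
rewrite /id_neg_rows !zshiftE.
case: i => [[|[|//]] ?]; case: j => [[|[|//]] ?] /=; rewrite ?perm1 ?permE /neg_perm.
all: move=> /eqP; rewrite xpair_eqE => /andP[/eqP eq1 /eqP eq2].
- by split; [apply: val_inj | ].
- by case: (id_neg_apart _ _ eq1 eq2).
- by case: (id_neg_apart _ _ (esym eq1) (esym eq2)).
- by split; [apply: val_inj | apply: oppr_inj].
Qed.

Lemma Ftilde_ge2 (K : nat) : odd N -> is_Ftilde N K -> (2 <= K)%N.
Proof. by move=> N_odd [_ maxK]; apply: maxK (id_neg_rows_CFR N_odd). Qed.

End Florentine.

Section Sequences.
Variables (R : realType) (n K : nat) (p : 'I_K -> {perm 'I_n.+1}).
Local Notation N := n.+1.
Local Notation L := (N * (N + 1))%N.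
Local Notation w := (omega (N + 1) : R[i]).
Local Notation u := (omega L : R[i]).

Fact w_prim : (N + 1).-primitive_root w.
Proof. by apply: omega_prim; rewrite addn1. Qed.

Fact w_neq0 : w != 0.
Proof. by rewrite (prim_root_eq0 w_prim) addn1. Qed.

Definition cseq (m : 'I_K) (i : nat) : R[i] :=
  match insub (i %% N)%N : option 'I_N with
  | Some x => w ^+ (p m x * i)
  | None => 0
  end.

Lemma cseqE m t : cseq m t = w ^+ (p m (inZp t) * t).
Proof.
rewrite /cseq; case: insubP => [x _ x_val | ]; last by rewrite ltn_pmod.
by congr (w ^+ (p m _ * t)); apply: val_inj.
Qed.

Lemma cseq_mod m t : cseq m (t %% L) = cseq m t.
Proof.
have inZp_mod : inZp (t %% L) = inZp t :> 'I_N.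
  by apply: val_inj; rewrite /= modn_dvdm // dvdn_mulr.
rewrite !cseqE inZp_mod; apply/eqP; rewrite (eq_prim_root_expr w_prim).
by rewrite -modnMmr modn_dvdm ?modnMmr // dvdn_mull.
Qed.

Lemma pcorr_cseq m m' tau :
  pcorr L (cseq m) (cseq m') tau =
  \sum_(x | p m x == p m' (zshift x tau))
     (N + 1)%:R * w ^ (- (p m' (zshift x tau) * tau)%N%:Z).
Proof.
rewrite /pcorr (big_ord_mul_split +%R N (N + 1)
  (fun t => cseq m t * conjc (cseq m' ((t + tau) %% L)))).
rewrite [RHS]big_mkcond; apply: eq_bigr => x _.
set a := nat_of_ord (p m x); set b := nat_of_ord (p m' (zshift x tau)).
have term (s : 'I_(N + 1)) :
    cseq m (x + N * s)%N * conjc (cseq m' ((x + N * s + tau) %% L)%N)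
    = w ^ (a%:Z * x%:Z - b%:Z * (x + tau)%N%:Z) * (w ^ (b%:Z - a%:Z)) ^+ s.
  rewrite cseq_mod !cseqE inZp_split inZp_split_shift -/a -/b.
  rewrite conjc_omega_expr [w ^+ _]exprnP -expfzDr ?w_neq0 // [_ ^+ s]exprnP exprz_exp.
  rewrite -expfzDr ?w_neq0 //.
  apply: omega_exprz_mod; first by rewrite addn1.
  rewrite eqz_mod_dvd; apply/dvdzP; exists ((a%:Z - b%:Z) * s%:Z).
  rewrite !PoszM !PoszD !PoszM; ring.
rewrite (eq_bigr _ (fun s _ => term s)) -mulr_sumr (sum_prim_root_exprz w_prim).
have a_lt : (a < N + 1)%N := ltn_addr 1 (ltn_ord _).
have b_lt : (b < N + 1)%N := ltn_addr 1 (ltn_ord _).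
rewrite dvdz_subn_small // eq_sym -[p m x == _]/(a == b).
case: eqP => [a_eq_b | _]; last by rewrite mulr0.
by rewrite mulrC a_eq_b; congr (_ * _ ^ _); rewrite !PoszM PoszD; ring.
Qed.

Lemma fdual_cseq m j :
  fdual L (cseq m) j = ((Num.sqrt (L%:R : R))^-1)%:C *
  \sum_(x | ((N + 1) %| p m x + j)%N)
     (N + 1)%:R * u ^ (((N * p m x)%N%:Z - j%:Z) * x%:Z).
Proof.
rewrite /fdual (big_ord_mul_split +%R N (N + 1) (fun t => cseq m t * u ^- (t * j))).
congr (_ * _); rewrite [RHS]big_mkcond; apply: eq_bigr => x _.
set a := nat_of_ord (p m x).
have L_gt0 : (0 < L)%N by rewrite muln_gt0 addn1.
have u_neq0 : u != 0 by rewrite (prim_root_eq0 (omega_prim R L_gt0)) -lt0n.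
have uN : u ^+ N = w by rewrite omega_mul_expr.
have term (s : 'I_(N + 1)) :
    cseq m (x + N * s)%N * u ^- ((x + N * s) * j)%N
    = u ^ (((N * a)%N%:Z - j%:Z) * x%:Z) * (w ^ (- (a + j)%N%:Z)) ^+ s.
  rewrite cseqE inZp_split -/a -uN -exprM exprnN [u ^+ _]exprnP -expfzDr //.
  rewrite [_ ^+ s]exprnP [u ^+ N]exprnP !exprz_exp -expfzDr //.
  apply: omega_exprz_mod => //; rewrite eqz_mod_dvd; apply/dvdzP; exists (a%:Z * s%:Z).
  rewrite !PoszM !PoszD !PoszM; ring.
rewrite (eq_bigr _ (fun s _ => term s)) -mulr_sumr (sum_prim_root_exprz w_prim).
by rewrite dvdzE abszN /=; case: ifP; rewrite ?mulr0 // mulrC.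
Qed.

Lemma forbidden_carrierP j : (j < L)%N ->
  (exists2 a : nat, (a < N)%N & j = (1 + a * (N + 1))%N) <-> ((N + 1) %| j + N)%N.
Proof.
move=> j_lt_L; split => [[a _ ->] | /dvdnP[q jE]].
  by rewrite (_ : 1 + a * (N + 1) + N = a.+1 * (N + 1))%N ?dvdn_mull //; lia.
case: q jE => [|q] jE; first lia.
by exists q; nia.
Qed.

Lemma fdual_cseq_forbidden m j : ((N + 1) %| j + N)%N -> fdual L (cseq m) j = 0.
Proof.
move=> forbidden_j; rewrite [(j + N)%N]addnC in forbidden_j.
rewrite fdual_cseq big_pred0 ?mulr0 // => x.
apply/negbTE/negP => pmx_dvd.
have pmx_lt := ltn_ord (p m x).
have N_lt : (N < N + 1)%N by rewrite addn1.
have pmx_eq_N := eqn_small_dvdn_addr (ltn_addr 1 pmx_lt) N_lt pmx_dvd forbidden_j.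
by rewrite pmx_eq_N ltnn in pmx_lt.
Qed.

Lemma normc_fdual_cseq m j : ~~ ((N + 1) %| j + N)%N ->
  normc (fdual L (cseq m) j) = Num.sqrt ((N + 1)%:R / N%:R).
Proof.
move=> allowed_j; rewrite fdual_cseq ComplexField.Normc.normcM.
have root_uniq (x y : 'I_N) :
    ((N + 1) %| p m x + j)%N -> ((N + 1) %| p m y + j)%N -> x = y.
  move=> pmx_dvd pmy_dvd; apply/(@perm_inj _ (p m))/val_inj.
  exact: eqn_small_dvdn_addr (ltn_addr 1 (ltn_ord _)) (ltn_addr 1 (ltn_ord _)) pmx_dvd pmy_dvd.
rewrite (normc_sum_uniq root_uniq (fun x _ => normc_natr_omega _ _ _ _)).
pose r := ((j + N) %% (N + 1))%N.
have r_gt0 : (0 < r)%N by rewrite lt0n.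
have a_lt_N : (N - r < N)%N by rewrite ltn_subrL r_gt0.
have -> : [exists x, ((N + 1) %| p m x + j)%N].
  apply/existsP; exists ((p m)^-1 (Ordinal a_lt_N))%g; rewrite permKV /=.
  have r_lt : (r < N + 1)%N by rewrite /r ltn_pmod ?addn1.
  have := divn_eq (j + N) (N + 1); rewrite -/r => jNE.
  by rewrite (_ : N - r + j = (j + N) %/ (N + 1) * (N + 1))%N ?dvdn_mull //; lia.
rewrite normc_real ?invr_ge0 ?sqrtr_ge0 //.
exact: invsqrt_mulnS.
Qed.

Lemma normc_pcorr_auto m tau : (0 < tau < L)%N ->
  normc (pcorr L (cseq m) (cseq m) tau) = if (N %| tau)%N then (N + 1)%:R else 0.
Proof.
move=> /andP[tau_gt0 tau_lt_L]; rewrite pcorr_cseq.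
have [N_dvd_tau | N_ndvd_tau] := boolP (N %| tau)%N; last first.
  rewrite big_pred0 ?ComplexField.Normc.normc0 // => x.
  by rewrite (inj_eq perm_inj) eq_sym zshift_eq (negbTE N_ndvd_tau).
have shift_id (x : 'I_N) : zshift x tau = x by apply/eqP; rewrite zshift_eq.
pose q := w ^ (- tau%:Z).
have q_order : q ^+ N.+1 = 1.
  rewrite exprnP exprz_exp mulrC -exprz_exp -exprnP -[N.+1]addn1.
  by rewrite (prim_expr_order w_prim) exp1rz.
have q_neq1 : q != 1.
  rewrite -(prim_order_dvdz w_prim) dvdzE abszN /=; apply: contraTN tau_lt_L => N1_dvd_tau.
  by rewrite -leqNgt dvdn_leq // Gauss_dvd ?N_dvd_tau // addn1 coprimenS.
rewrite (eq_bigl xpredT) => [|x]; last by rewrite shift_id eqxx.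
rewrite -mulr_sumr ComplexField.Normc.normcM normc_nat.
have -> : \sum_x w ^ (- (p m (zshift x tau) * tau)%N%:Z) = \sum_(v < N) q ^+ v.
  rewrite [RHS](reindex_inj (@perm_inj _ (p m))); apply: eq_bigr => x _.
  by rewrite shift_id exprnP exprz_exp; congr (_ ^ _); rewrite PoszM; ring.
rewrite (sum_expr_unity_root_but_last q_order q_neq1) normcN normcX.
by rewrite normc_omega_expz expr1n mulr1.
Qed.

Lemma bigmax_pcorr_auto m :
  \big[Num.max/0]_(tau < L | (0 < tau)%N) normc (pcorr L (cseq m) (cseq m) tau)
  = (N + 1)%:R.
Proof.
have N_lt_L : (N < L)%N by rewrite ltn_Pmulr // addn1.
apply: (bigmax_attained (i0 := Ordinal N_lt_L)) => //= [|tau tau_gt0].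
  by rewrite normc_pcorr_auto ?dvdnn.
by rewrite normc_pcorr_auto ?tau_gt0 ?ltn_ord //; case: ifP.
Qed.

Lemma theta_a_cseq : (0 < K)%N -> theta_a K L cseq = (N + 1)%:R.
Proof.
move=> K_gt0; apply: (bigmax_attained (i0 := Ordinal K_gt0)) => // [|m _];
  by rewrite bigmax_pcorr_auto.
Qed.

Hypothesis p_CFR : is_CFR p.

Lemma normc_pcorr_cross m m' tau : m != m' ->
  normc (pcorr L (cseq m) (cseq m') tau) =
  if [exists x, p m x == p m' (zshift x tau)] then (N + 1)%:R else 0.
Proof.
move=> neq_mm'; rewrite pcorr_cseq.
apply: normc_sum_uniq => [x y /eqP px /eqP py | x _]; last exact: normc_natr_omega.
exact: CFR_cross_uniq p_CFR neq_mm' px py.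
Qed.

Lemma bigmax_pcorr_cross m m' : m != m' ->
  \big[Num.max/0]_(tau < L) normc (pcorr L (cseq m) (cseq m') tau) = (N + 1)%:R.
Proof.
move=> neq_mm'; pose x0 : 'I_N := 0.
pose tau0 := ((p m')^-1 (p m x0))%g.
have tau0_lt_L : (tau0 < L)%N by rewrite (leq_trans (ltn_ord _)) // leq_pmulr // addn1.
apply: (bigmax_attained (i0 := Ordinal tau0_lt_L)) => // [|tau _].
  rewrite normc_pcorr_cross // ifT //; apply/existsP; exists x0.
  have -> : zshift x0 tau0 = ((p m')^-1 (p m x0))%g.
    by apply: val_inj; rewrite /= add0n modn_small.
  by rewrite permKV.
by rewrite normc_pcorr_cross //; case: ifP.
Qed.

Lemma theta_c_cseq : (1 < K)%N -> theta_c K L cseq = (N + 1)%:R.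
Proof.
move=> K_gt1; have K_gt0 := ltnW K_gt1.
pose m0 := Ordinal K_gt0; pose m1 := Ordinal K_gt1.
have cross_max m : \big[Num.max/0]_(m' < K | m != m')
    \big[Num.max/0]_(tau < L) normc (pcorr L (cseq m) (cseq m') tau) = (N + 1)%:R.
  have [m' neq_mm'] : exists m', m != m'.
    by case: (eqVneq m m0) => [->|neq_mm0]; [exists m1 | exists m0].
  apply: (bigmax_attained (i0 := m')); rewrite ?bigmax_pcorr_cross //.
  by move=> m'' neq_mm''; rewrite bigmax_pcorr_cross.
apply: (bigmax_attained (i0 := m0) _ _ (cross_max m0)) => // m _.
by rewrite cross_max.
Qed.

End Sequences.

Theorem theorem3 (R : realType) (N K : nat) (pi : 'I_K -> {perm 'I_N})
  (hN3 : (3 <= N)%N) (hNodd : odd N)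
  (hK : is_Ftilde N K) (hA : is_CFR pi) :
  let L := (N * (N + 1))%N in
  let c : 'I_K -> nat -> R[i] := fun m i =>
    match insub (i %% N)%N : option 'I_N with
    | Some x => omega (N + 1) ^+ (pi m x * i)
    | None => 0 (* unreachable: i %% N < N since N >= 3 *)
    end in
  [/\ theta_a K L c = (N + 1)%:R,
      theta_c K L c = (N + 1)%:R,
      theta_max K L c = (N + 1)%:R &
      forall m : 'I_K, forall j : nat, (j < L)%N ->
        ((exists2 a : nat, (a < N)%N & j = (1 + a * (N + 1))%N) ->
           fdual L (c m) j = 0) /\
        (~ (exists2 a : nat, (a < N)%N & j = (1 + a * (N + 1))%N) ->
           ComplexField.Normc.normc (fdual L (c m) j) = Num.sqrt ((N + 1)%:R / N%:R))].
Proof.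
case: N => [|n] in pi hN3 hNodd hK hA *; first by [].
move=> L c; have K_gt1 := Ftilde_ge2 hNodd hK.
have theta_a_eq : theta_a K L c = _ := theta_a_cseq R pi (ltnW K_gt1).
have theta_c_eq : theta_c K L c = _ := theta_c_cseq R hA K_gt1.
split => //; first by rewrite /theta_max theta_a_eq theta_c_eq maxxx.
move=> m j j_lt_L; rewrite forbidden_carrierP //.
by split => [|/negP]; [exact: fdual_cseq_forbidden | exact: normc_fdual_cseq].
Qed.
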